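(* Let $A\subseteq\mathbb N$ be such that both $A$ and $\mathbb N\setminus A$ are infinite. Then there is no $\{\cup,\cap,\overline{\phantom{c}},+,/\}$-circuit $C$ with $I(C)=A$. (In particular, no such circuit describes the set of prime numbers.)
   Context: Natural numbers include $0$. For $A,B\subseteq\mathbb N$: $A\cup B$, $A\cap B$ are the usual operations, $\overline{A}=\mathbb N\setminus A$, $A+B=\{a+b: a\in A, b\in B\}$, $A\times B=\{a\cdot b: a\in A, b\in B\}$, and $A/B=\{c\in\mathbb N:\exists a\in A\ \exists b\in B\setminus\{0\}: a=c\cdot b\}$ (exact integer division without remainder or rounding). For $\emptyset\ne\mathcal O\subseteq\{\cup,\cap,\overline{\phantom{c}},+,\times,/\}$, an $\mathcal O$-circuit $C=(V,E,g_C,\alpha)$ is a finite acyclic directed multigraph with gate set $V\subseteq\mathbb N$, every gate having indegree $0$, $1$ or $2$, a designated output gate $g_C\in V$, and a labeling $\alpha$: gates of indegree $0$ (input gates) are labeled by natural numbers, gates of indegree $1$ are labeled $\overline{\phantom{c}}$ (allowed only if $\overline{\phantom{c}}\in\mathcal O$), and gates of indegree $2$ are labeled by an operation in $\mathcal O\setminus\{\overline{\phantom{c}}\}$. The result set $I(g)\subseteq\mathbb N$ is defined inductively: $I(g)=\{\alpha(g)\}$ for an input gate; $I(g)=\mathbb N\setminus I(p)$ for a complement gate with predecessor $p$; $I(g)=I(g_1)\,\sigma\,I(g_2)$ for a gate labeled $\sigma$ with predecessors $g_1\le g_2$ (a double edge from one gate gives $g_1=g_2$). $I(C)=I(g_C)$.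 *)

From mathcomp Require Import all_boot.
Set Implicit Arguments. Unset Strict Implicit. Unset Printing Implicit Defensive.

Definition natset := nat -> Prop.

Definition set_cup (A B : natset) : natset := fun c => A c \/ B c.
Definition set_cap (A B : natset) : natset := fun c => A c /\ B c.
Definition set_compl (A : natset) : natset := fun c => ~ A c.
Definition set_plus (A B : natset) : natset :=
  fun c => exists a b, A a /\ B b /\ c = a + b.
Definition set_times (A B : natset) : natset :=
  fun c => exists a b, A a /\ B b /\ c = a * b.
Definition set_div (A B : natset) : natset :=
  fun c => exists a b, A a /\ B b /\ b <> 0 /\ a = c * b.

Definition infinite_set (A : natset) : Prop := forall m, exists n, m <= n /\ A n.

Inductive op := OCup | OCap | OCompl | OPlus | OTimes | ODiv.

Inductive label := LInput of nat | LCompl | LBin of op.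

Definition apply_bin (o : op) (A B : natset) : natset :=
  match o with
  | OCup => set_cup A B
  | OCap => set_cap A B
  | OPlus => set_plus A B
  | OTimes => set_times A B
  | ODiv => set_div A B
  | OCompl => A (* never used: binary gates are not labeled OCompl *)
  end.

(** A circuit (V, E, g_C, alpha): [gates] lists the gate set V (a finite subset
    of N), [preds g] lists the predecessors of g with multiplicity (the
    multiset of edges into g, a double edge giving a repeated entry), sorted
    increasingly so that for a binary gate preds g = [g1; g2] with g1 <= g2;
    [lab] is the labeling alpha and [out] the output gate g_C. *)
Record circuit := Circuit {
  gates : seq nat;
  preds : nat -> seq nat;
  lab   : nat -> label;
  out   : nat
}.

Definition edge (C : circuit) (p g : nat) : Prop := g \in gates C /\ p \in preds C g.

Inductive path1 (C : circuit) : nat -> nat -> Prop :=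
  | path1_edge x y : edge C x y -> path1 C x y
  | path1_step x y z : edge C x y -> path1 C y z -> path1 C x z.

Definition acyclic (C : circuit) : Prop := forall g, ~ path1 C g g.

(** Well-formed O-circuit, for O given as a predicate on operations
    (the paper requires O nonempty). *)
Definition is_circuit (O : op -> Prop) (C : circuit) : Prop :=
  [/\ out C \in gates C,
      (forall g p, g \in gates C -> p \in preds C g -> p \in gates C),
      (forall g, g \in gates C -> sorted leq (preds C g)),
      acyclic C &
      (forall g, g \in gates C ->
         match lab C g with
         | LInput _ => size (preds C g) = 0
         | LCompl => size (preds C g) = 1 /\ O OCompl
         | LBin o => size (preds C g) = 2 /\ o <> OCompl /\ O o
         end)].

(** [I] is the (inductively defined) result-set assignment of C: it satisfies
    the defining equations at every gate. By acyclicity, such an assignment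
    exists and is unique on V. *)
Definition result_sets (C : circuit) (I : nat -> natset) : Prop :=
  forall g, g \in gates C ->
    match lab C g, preds C g with
    | LInput n, [::] => forall c, I g c <-> c = n
    | LCompl, [:: p] => forall c, I g c <-> set_compl (I p) c
    | LBin o, [:: g1; g2] => forall c, I g c <-> apply_bin o (I g1) (I g2) c
    | _, _ => False
    end.

Definition computes (C : circuit) (A : natset) : Prop :=
  exists I, result_sets C I /\ forall c, I (out C) c <-> A c.

Definition O_noTimes (o : op) : Prop :=
  o = OCup \/ o = OCap \/ o = OCompl \/ o = OPlus \/ o = ODiv.

(** Every gate of a circuit without multiplication computes a set that is
    finite or cofinite: singletons are, and this class is closed under union,
    intersection, complement, addition and exact division (for division only
    the dividend matters).  Since a circuit is finite and acyclic, induction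
    over its gates reaches the output gate, but a set that is infinite and
    coinfinite is neither finite nor cofinite. *)

From mathcomp Require Import all_boot.
From mathcomp Require Import zify.
From Stdlib Require Import Classical.

Definition finite_or_cofinite (X : natset) : Prop :=
  (exists m, forall c, X c -> c < m) \/ (exists m, forall c, m <= c -> X c).

Notation fcof := finite_or_cofinite.

Lemma fcof_ext (X Y : natset) : (forall c, X c <-> Y c) -> fcof Y -> fcof X.
Proof.
move=> XY [[m Ym]|[m Ym]]; [left|right]; exists m => c.
  by move/XY/Ym.
by move/Ym/XY.
Qed.

Lemma fcof_infinite_coinfinite (X : natset) :
  infinite_set X -> infinite_set (set_compl X) -> ~ fcof X.
Proof.
move=> infX infCX [[m Xm]|[m Xm]].
  by have [n [mn /Xm]] := infX m; lia.
by have [n [mn]] := infCX m; apply; apply: Xm.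
Qed.

Lemma fcof_singleton (n : nat) : fcof (fun c => c = n).
Proof. by left; exists n.+1 => c ->. Qed.

Lemma fcof_compl (X : natset) : fcof X -> fcof (set_compl X).
Proof.
case=> [[m Xm]|[m Xm]].
  by right; exists m => c mc /Xm; lia.
by left; exists m => c CXc; rewrite ltnNge; apply/negP => /Xm.
Qed.

Lemma fcof_cup (X Y : natset) : fcof X -> fcof Y -> fcof (set_cup X Y).
Proof.
case=> [[a Xa]|[a Xa]]; last by right; exists a => c /Xa; left.
case=> [[b Yb]|[b Yb]]; last by right; exists b => c /Yb; right.
by left; exists (a + b) => c [/Xa|/Yb]; lia.
Qed.

Lemma fcof_cap (X Y : natset) : fcof X -> fcof Y -> fcof (set_cap X Y).
Proof.
case=> [[a Xa]|[a Xa]]; first by left; exists a => c [/Xa].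
case=> [[b Yb]|[b Yb]]; first by left; exists b => c [_ /Yb].
by right; exists (a + b) => c abc; split; [apply: Xa | apply: Yb]; lia.
Qed.

Lemma set_plusC (X Y : natset) (c : nat) : set_plus X Y c <-> set_plus Y X c.
Proof. by split=> -[a [b [Xa [Yb ->]]]]; exists b, a; rewrite addnC. Qed.

Lemma fcof_plus_cofinite (X Y : natset) :
  (exists m, forall c, m <= c -> X c) -> fcof (set_plus X Y).
Proof.
move=> [a Xa]; have [[y Yy]|noY] := classic (exists y, Y y).
  right; exists (a + y) => c ayc; exists (c - y), y.
  by split; [apply: Xa; lia | split=> //; lia].
by left; exists 0 => c [x [y [_ [Yy _]]]]; case: noY; exists y.
Qed.

Lemma fcof_plus (X Y : natset) : fcof X -> fcof Y -> fcof (set_plus X Y).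
Proof.
case=> [[a Xa]|cofX]; last by move=> _; exact: fcof_plus_cofinite.
case=> [[b Yb]|cofY].
  by left; exists (a + b) => c [x [y [/Xa xa [/Yb yb ->]]]]; lia.
exact: fcof_ext (set_plusC X Y) (fcof_plus_cofinite Y X cofY).
Qed.

Lemma fcof_div (X Y : natset) : fcof X -> fcof (set_div X Y).
Proof.
case=> [[a Xa]|[a Xa]].
  left; exists a => c [x [y [/Xa xa [_ [y0 xE]]]]]; nia.
have [[y [Yy y0]]|noY] := classic (exists y, Y y /\ y <> 0).
  by right; exists a => c ac; exists (c * y), y; split; [apply: Xa; nia|].
by left; exists 0 => c [x [y [_ [Yy [y0 _]]]]]; case: noY; exists y.
Qed.

Lemma fcof_gate (O : op -> Prop) (C : circuit) (I : nat -> natset) (g : nat) :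
  ~ O OTimes -> is_circuit O C -> result_sets C I -> g \in gates C ->
  (forall p, p \in preds C g -> fcof (I p)) -> fcof (I g).
Proof.
move=> noTimes [_ _ _ _ arity_at] results g_in fcof_preds.
move: (arity_at g g_in) (results g g_in) fcof_preds.
case: (lab C g) => [n||o]; case: (preds C g) => [|p [|q [|? ?]]] //= arity Ig fcof_preds;
  try by case: arity.
- exact: fcof_ext Ig (fcof_singleton n).
- by apply: fcof_ext Ig _; apply/fcof_compl/fcof_preds; rewrite inE.
have fcof_p : fcof (I p) by apply: fcof_preds; rewrite !inE eqxx.
have fcof_q : fcof (I q) by apply: fcof_preds; rewrite !inE eqxx orbT.
apply: fcof_ext Ig _; case: o arity => -[_ [not_compl Oo]] /=.
- exact: fcof_cup.
- exact: fcof_cap.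
- by case: not_compl.
- exact: fcof_plus.
- by case: noTimes.
- exact: fcof_div.
Qed.

Definition predb (C : circuit) : rel nat :=
  fun g p => (g \in gates C) && (p \in preds C g).

Lemma predbP (C : circuit) (g p : nat) : reflect (edge C p g) (predb C g p).
Proof. exact: andP. Qed.

Lemma path1_rcons (C : circuit) (x y z : nat) :
  path1 C x y -> edge C y z -> path1 C x z.
Proof.
elim=> [{}x {}y xy yz | {}x {}y w xy _ IH yz]; apply: path1_step xy _.
  exact: path1_edge.
exact: IH.
Qed.

Lemma predb_path_path1 {C : circuit} {x y : nat} {s : seq nat} :
  path (predb C) x s -> y \in s -> path1 C y x.
Proof.
elim: s x => [|z s IH] x //= /andP[/predbP xz zs]; rewrite inE => /orP[/eqP->|ys].
  exact: path1_edge.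
exact: path1_rcons (IH z zs ys) xz.
Qed.

Lemma acyclic_predb_path_uniq {C : circuit} {x : nat} {s : seq nat} :
  acyclic C -> path (predb C) x s -> uniq (x :: s).
Proof.
move=> acyc; elim: s x => [|y s IH] x // xs.
rewrite cons_uniq IH; last by case/andP: xs.
by rewrite andbT; apply/negP => /(predb_path_path1 xs); apply: acyc.
Qed.

Section CircuitInduction.

Variables (C : circuit) (P : nat -> Prop).
Hypothesis preds_closed :
  forall g p, g \in gates C -> p \in preds C g -> p \in gates C.
Hypothesis acyc : acyclic C.
Hypothesis P_gate :
  forall g, g \in gates C -> (forall p, p \in preds C g -> P p) -> P g.

Lemma not_P_pred {g : nat} :
  g \in gates C -> ~ P g -> exists2 p, p \in preds C g & ~ P p.
Proof.
move=> g_in notPg; apply: NNPP => no_pred; apply/notPg/P_gate => // p p_in.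
by apply: NNPP => notPp; apply: no_pred; exists p.
Qed.

Lemma long_failing_path {g0 : nat} :
  g0 \in gates C -> ~ P g0 -> forall k, exists s : seq nat,
    [/\ size s = k, path (predb C) g0 s, ~ P (last g0 s) & all (mem (gates C)) (g0 :: s)].
Proof.
move=> g0_in notPg0; elim=> [|k [s [size_s path_s notP_last all_in]]].
  by exists [::]; rewrite /= g0_in.
have last_in : last g0 s \in gates C by apply: (allP all_in); apply: mem_last.
have [p p_in notPp] := not_P_pred last_in notP_last.
exists (rcons s p); split.
- by rewrite size_rcons size_s.
- by rewrite rcons_path path_s /predb last_in p_in.
- by rewrite last_rcons.
- by rewrite -rcons_cons all_rcons all_in andbT; apply: preds_closed p_in.
Qed.

Lemma circuit_ind (g : nat) : g \in gates C -> P g.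
Proof.
(* A path visiting more gates than there are repeats one, closing a cycle. *)
move=> g_in; apply: NNPP => notPg.
have [s [size_s path_s _ all_in]] := long_failing_path g_in notPg (size (gates C)).
have := uniq_leq_size (acyclic_predb_path_uniq acyc path_s) (fun x => allP all_in x).
by rewrite /= size_s ltnn.
Qed.

End CircuitInduction.

Theorem corollary3 (A : natset) :
  infinite_set A -> infinite_set (set_compl A) ->
  ~ exists C : circuit, is_circuit O_noTimes C /\ computes C A.
Proof.
move=> infA infCA [C [circ [I [results I_out]]]].
have [out_in preds_closed _ acyc _] := circ.
have noTimes : ~ O_noTimes OTimes by case=> [|[|[|[|]]]].
have fcof_gates : forall g, g \in gates C -> fcof (I g).
  by apply: circuit_ind => // g; exact: fcof_gate noTimes circ results.
apply: fcof_infinite_coinfinite infA infCA _.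
exact: fcof_ext (fun c => iff_sym (I_out c)) (fcof_gates _ out_in).
Qed.
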